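(* Let $X_\Sigma$ be a projective toric variety and $D$ an $\mathbf R$-ample divisor on $X_\Sigma$. For each primitive collection $C$ let $\lambda_C\in\Lambda^D$ be the unique element with $\overline{S^{\chi_D}_{\lambda_C}}=V(x_\rho:\rho\in C)$. Then $$\{\mathbf 0\}=\bigcap_{\lambda\in\Lambda^D}\overline{S^{\chi_D}_\lambda}=\bigcap_{C\text{ primitive collection}}\overline{S^{\chi_D}_{\lambda_C}},$$ where $\mathbf 0$ is the origin of $\mathbf C^{\Sigma(1)}$.
   Context: $\Sigma$ complete fan with rays $\Sigma(1)$, generators $u_\rho$, divisors $D_\rho$; a primitive collection is $C\subset\Sigma(1)$ not contained in $\sigma(1)$ for any cone $\sigma$ while every proper subset is; $\mathbf C^{\Sigma(1)}=\mathrm{Spec}\,\mathbf C[x_\rho]$, $Z(\Sigma)=\bigcup_CV(x_\rho:\rho\in C)$. $\Gamma(G)=\{b\in\mathbf Z^{\Sigma(1)}:\sum b_\rho u_\rho=0\}$, $\langle\chi_D,b\rangle=\sum a_\rho b_\rho$ for $D=\sum a_\rho D_\rho$ (extended $\mathbf R$-linearly), $\Gamma(G)_{\mathbf R}\subset\mathbf R^{\Sigma(1)}$ with restricted standard norm. $\mathbf R$-ample divisors are elements of the ample cone in $\mathrm{Pic}(X_\Sigma)_{\mathbf R}$. For $x\in Z(\Sigma)$, $\sigma_x=\{v\in\Gamma(G)_{\mathbf R}:v_\rho\ge0\text{ whenever }x_\rho\ne0\}$; $v\mapsto\langle\chi_D,v\rangle/\|v\|$ attains its negative minimum $M^D(x)$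 on $\sigma_x\setminus\{0\}$ exactly on one ray, and $\lambda^D_x$ is the vector on it with $\|\lambda^D_x\|=-M^D(x)$. $\Lambda^D=\{\lambda^D_x:x\in Z(\Sigma)\}$, $S^{\chi_D}_\lambda=\{x\in Z(\Sigma):\lambda^D_x=\lambda\}$; for each primitive collection $C$ such a $\lambda_C$ exists and is unique. *)

From mathcomp Require Import all_boot all_order all_algebra.
From mathcomp Require Import Rstruct.
From mathcomp Require Import complex.
From mathcomp Require Import mpoly.
Set Implicit Arguments. Unset Strict Implicit. Unset Printing Implicit Defensive.
Import Order.TTheory GRing.Theory Num.Theory.
Local Open Scope ring_scope.

Notation R := Rdefinitions.R.
Definition CC : numClosedFieldType := R[i].

(* Fan data.  N = Z^d, rays Sigma(1) = 'I_n, u rho : 'I_d -> int is the     *)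
(* (primitive) generator u_rho.  A cone sigma of the fan is represented by   *)
(* its set of rays sigma(1) : {set 'I_n}; the fan is F : {set {set 'I_n}}.   *)
Section Fan.
Variables (d n : nat) (u : 'I_n -> 'I_d -> int).

Definition ucoord (rho : 'I_n) : 'I_d -> R := fun i => (u rho i)%:~R.

Definition dotd (m w : 'I_d -> R) : R := \sum_(i < d) m i * w i.

Definition in_cone (S : {set 'I_n}) (w : 'I_d -> R) : Prop :=
  exists c : 'I_n -> R, (forall rho, 0 <= c rho) /\
    (forall rho, rho \notin S -> c rho = 0) /\
    (forall i, w i = \sum_(rho < n) c rho * ucoord rho i).

Definition is_face (S : {set 'I_n}) (A : ('I_d -> R) -> Prop) : Prop :=
  exists m : 'I_d -> R, (forall w, in_cone S w -> 0 <= dotd m w) /\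
    (forall w, A w <-> (in_cone S w /\ dotd m w = 0)).

Definition primitive_vec (v : 'I_d -> int) : Prop :=
  (exists i, v i != 0) /\
  (forall k : int, 1 < k -> ~ (forall i, (k %| v i)%Z)).

(* F is a fan (of strongly convex rational polyhedral cones) whose rays are
   exactly the u_rho, and whose cones have ray sets sigma(1) = the elements
   of F *)
Definition is_fan (F : {set {set 'I_n}}) : Prop :=
  (forall rho, primitive_vec (u rho)) /\
  [/\ (forall rho, [set rho] \in F),
      (forall sigma, sigma \in F -> forall w,
          in_cone sigma w -> in_cone sigma (fun i => - w i) -> w = (fun _ => 0)),
      (forall sigma, sigma \in F -> forall rho,
          in_cone sigma (ucoord rho) -> rho \in sigma),
      (forall sigma, sigma \in F -> forall m : 'I_d -> R,
          (forall w, in_cone sigma w -> 0 <= dotd m w) ->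
          exists2 tau, tau \in F & forall w,
            in_cone tau w <-> (in_cone sigma w /\ dotd m w = 0)) &
      (forall sigma sigma', sigma \in F -> sigma' \in F ->
          is_face sigma (fun w => in_cone sigma w /\ in_cone sigma' w) /\
          is_face sigma' (fun w => in_cone sigma w /\ in_cone sigma' w))].

Definition complete_fan (F : {set {set 'I_n}}) : Prop :=
  forall w : 'I_d -> R, exists2 sigma, sigma \in F & in_cone sigma w.

Definition maximal_cone (F : {set {set 'I_n}}) (sigma : {set 'I_n}) : Prop :=
  sigma \in F /\ (forall tau, tau \in F -> sigma \subset tau -> tau = sigma).

(* D = sum_rho a_rho D_rho (real coefficients) is R-Cartier and ample:
   its support function is given by m_sigma on each maximal cone and is
   strictly convex (CLS, Thm 6.1.14 / Lemma 6.1.13). *)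
Definition ample (F : {set {set 'I_n}}) (a : 'I_n -> R) : Prop :=
  forall sigma, maximal_cone F sigma ->
    exists m : 'I_d -> R,
      (forall rho, rho \in sigma -> dotd m (ucoord rho) = - a rho) /\
      (forall rho, rho \notin sigma -> - a rho < dotd m (ucoord rho)).

Definition projective (F : {set {set 'I_n}}) : Prop :=
  exists a : 'I_n -> int, ample F (fun rho => (a rho)%:~R).

Definition primitive_collection (F : {set {set 'I_n}}) (C : {set 'I_n}) : Prop :=
  (forall sigma, sigma \in F -> ~~ (C \subset sigma)) /\
  (forall C' : {set 'I_n}, C' \proper C -> exists2 sigma, sigma \in F & C' \subset sigma).

Definition VC (C : {set 'I_n}) (x : 'I_n -> CC) : Prop :=
  forall rho, rho \in C -> x rho = 0.

Definition inZ (F : {set {set 'I_n}}) (x : 'I_n -> CC) : Prop :=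
  exists2 C, primitive_collection F C & VC C x.

Definition inGammaR (v : 'I_n -> R) : Prop :=
  forall i, \sum_(rho < n) v rho * ucoord rho i = 0.

Definition pairing (a v : 'I_n -> R) : R := \sum_(rho < n) a rho * v rho.

Definition normR (v : 'I_n -> R) : R := Num.sqrt (\sum_(rho < n) v rho ^+ 2).

Definition nonzero (v : 'I_n -> R) : Prop := exists rho, v rho != 0.

Definition sigma_x (x : 'I_n -> CC) (v : 'I_n -> R) : Prop :=
  inGammaR v /\ (forall rho, x rho != 0 -> 0 <= v rho).

Definition ratio (a v : 'I_n -> R) : R := pairing a v / normR v.

(* l = lambda^D_x : l lies on the unique ray of sigma_x \ {0} on which
   v |-> <chi_D, v>/||v|| attains its (negative) minimum M^D(x), and
   ||l|| = - M^D(x). *)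
Definition is_lambda (a : 'I_n -> R) (x : 'I_n -> CC) (l : 'I_n -> R) : Prop :=
  sigma_x x l /\
  [/\ nonzero l, ratio a l < 0,
      (forall v, sigma_x x v -> nonzero v -> ratio a l <= ratio a v),
      (forall v, sigma_x x v -> nonzero v -> ratio a v = ratio a l ->
          exists2 t : R, 0 < t & v = (fun rho => t * l rho)) &
      normR l = - ratio a l].

Definition LambdaD (F : {set {set 'I_n}}) (a : 'I_n -> R) (l : 'I_n -> R) : Prop :=
  exists2 x, inZ F x & is_lambda a x l.

Definition stratum (F : {set {set 'I_n}}) (a : 'I_n -> R) (l : 'I_n -> R)
  (x : 'I_n -> CC) : Prop :=
  inZ F x /\ is_lambda a x l.

End Fan.

Definition zclosure (n : nat) (S : ('I_n -> CC) -> Prop) (x : 'I_n -> CC) : Prop :=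
  forall p : {mpoly CC[n]}, (forall y, S y -> p.@[y] = 0) -> p.@[x] = 0.

Definition origin (n : nat) : 'I_n -> CC := fun _ => 0.
Arguments origin n : clear implicits.

From Pilot Require Import Defs.
From mathcomp Require Import all_boot all_order all_algebra.
From mathcomp Require Import Rstruct complex mpoly.
From mathcomp.algebra_tactics Require Import ring lra.
From Stdlib Require List.
From Stdlib Require Import FunctionalExtensionality.
Set Implicit Arguments. Unset Strict Implicit.
Import Order.TTheory GRing.Theory Num.Theory.
Local Open Scope ring_scope.

(* Every ray [r] lies in a primitive collection [C], and the point [x_C] whose
   zero coordinates are exactly those in [C] lies in [Z(Sigma)].  Its
   [lambda] is the nearest point to [-chi_D] of the polyhedral cone
   [sigma_{x_C}] (nearest points of polyhedral cones exist by induction on the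
   number of facets).  Ampleness gives [<chi_D, v> >= 0] for every
   [v in Gamma(G)] whose negative coordinates lie in a cone; as every proper
   subset of [C] lies in a cone and [<chi_D, lambda> < 0], [lambda] is
   negative on all of [C].  Hence [x_r] vanishes on the stratum of [lambda],
   so the intersection of the closures is the origin.  The origin lies in
   every closure since strata are stable under scaling by [C^*]. *)

Section Euclidean.
Variable n : nat.
Implicit Types (p v w x y z : 'I_n -> R).

Lemma pairingC x y : pairing x y = pairing y x.
Proof. by apply: eq_bigr => i _; rewrite mulrC. Qed.

Lemma pairing_linr w x y z (al be : R) :
  (forall i, z i = al * x i + be * y i) ->
  pairing w z = al * pairing w x + be * pairing w y.
Proof.
move=> zE; rewrite /pairing !mulr_sumr -big_split /=.
by apply: eq_bigr => i _; rewrite zE; ring.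
Qed.

Lemma pairing_linl w x y z (al be : R) :
  (forall i, z i = al * x i + be * y i) ->
  pairing z w = al * pairing x w + be * pairing y w.
Proof. by move=> zE; rewrite pairingC (pairing_linr _ zE) !(pairingC w). Qed.

Lemma pairing_self_lin x y z (al be : R) :
  (forall i, z i = al * x i + be * y i) ->
  pairing z z = al ^+ 2 * pairing x x + 2 * al * be * pairing x y
                + be ^+ 2 * pairing y y.
Proof.
move=> zE; rewrite /pairing !mulr_sumr -!big_split /=.
by apply: eq_bigr => i _; rewrite zE; ring.
Qed.

Lemma pairing0l x w : (forall i, x i = 0) -> pairing x w = 0.
Proof. by move=> x0; apply: big1 => i _; rewrite x0 mul0r. Qed.

Lemma pairing_deltal (r : 'I_n) v : pairing (fun i => (i == r)%:R) v = v r.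
Proof.
rewrite /pairing (bigD1 r) //= eqxx mul1r big1 ?addr0 // => i /negbTE ->.
by rewrite mul0r.
Qed.

Lemma pairing_self_ge0 x : 0 <= pairing x x.
Proof. by apply: sumr_ge0 => i _; rewrite -expr2 sqr_ge0. Qed.

Lemma pairing_self_eq0 x : pairing x x = 0 -> forall i, x i = 0.
Proof.
move=> x0 i; have sq_ge0 (j : 'I_n) : true -> 0 <= x j * x j.
  by rewrite -expr2 sqr_ge0.
have /eqP := psumr_eq0P sq_ge0 x0 (i := i) isT.
by rewrite mulf_eq0 orbb => /eqP.
Qed.

Lemma pairing_self_gt0 x : nonzero x -> 0 < pairing x x.
Proof.
move=> [r xr]; rewrite lt0r pairing_self_ge0 andbT.
by apply: contraNneq xr => /pairing_self_eq0 ->.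
Qed.

Lemma normR_pairing v : normR v = Num.sqrt (pairing v v).
Proof. by congr Num.sqrt; apply: eq_bigr => i _; rewrite expr2. Qed.

Lemma normR_gt0 v : nonzero v -> 0 < normR v.
Proof. by rewrite normR_pairing sqrtr_gt0 => /pairing_self_gt0. Qed.

Lemma cauchy_schwarz p v : nonzero p -> nonzero v ->
  pairing p v <= normR p * normR v /\
  (pairing p v = normR p * normR v -> v = (fun i => normR v / normR p * p i)).
Proof.
rewrite !normR_pairing => /pairing_self_gt0 p_gt0 /pairing_self_gt0 v_gt0.
set be := Num.sqrt (pairing p p); set al := Num.sqrt (pairing v v).
have be_gt0 : 0 < be by rewrite sqrtr_gt0.
have al_gt0 : 0 < al by rewrite sqrtr_gt0.
pose w i := al * p i + (- be) * v i.
have := pairing_self_lin (fun i => erefl (w i)).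
rewrite -[pairing p p](sqr_sqrtr (ltW p_gt0)) -[pairing v v](sqr_sqrtr (ltW v_gt0)).
rewrite -/al -/be => wE.
have {}wE : pairing w w = 2 * (al * be) * (be * al - pairing p v).
  by rewrite wE; ring.
split.
  have := pairing_self_ge0 w; rewrite wE pmulr_rge0 ?mulr_gt0 // subr_ge0.
  by rewrite mulrC.
move=> pv; apply: functional_extensionality => i.
have /pairing_self_eq0/(_ i) : pairing w w = 0 by rewrite wE pv subrr mulr0.
rewrite /w mulNr => /eqP; rewrite subr_eq0 => /eqP wi.
by rewrite mulrAC wi mulrAC divff ?mul1r // gt_eqF.
Qed.

End Euclidean.

Section PolyhedralCone.
Variable n : nat.
Implicit Types (b p v w x y z : 'I_n -> R) (E G : seq ('I_n -> R)).

Definition orth E v := List.Forall (fun e => pairing e v = 0) E.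

Definition polycone E G v :=
  orth E v /\ List.Forall (fun g => 0 <= pairing g v) G.

Definition sqdist b v := pairing (fun i => b i - v i) (fun i => b i - v i).

Lemma orth_lin E x y z (al be : R) : (forall i, z i = al * x i + be * y i) ->
  orth E x -> orth E y -> orth E z.
Proof.
move=> zE /List.Forall_forall xE /List.Forall_forall yE.
apply/List.Forall_forall => e eE.
by rewrite (pairing_linr _ zE) xE // yE //; ring.
Qed.

Lemma polycone_conic E G x y z (al be : R) : 0 <= al -> 0 <= be ->
  (forall i, z i = al * x i + be * y i) ->
  polycone E G x -> polycone E G y -> polycone E G z.
Proof.
move=> al_ge0 be_ge0 zE [xE /List.Forall_forall xG] [yE /List.Forall_forall yG].
split; first exact: orth_lin zE xE yE.
apply/List.Forall_forall => g gG; rewrite (pairing_linr _ zE).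
by apply: addr_ge0; apply: mulr_ge0 => //; [apply: xG | apply: yG].
Qed.

Lemma orth_proj_exists E b : exists p,
  orth E p /\ forall v, orth E v -> pairing (fun i => b i - p i) v = 0.
Proof.
elim: E b => [|e E IH] b.
  by exists b; split => // v _; apply: pairing0l => i; rewrite subrr.
(* With [r] the projection of [e] onto [orth E], remove from the projection
   [p] of [b] its component along [r]. *)
have [p [pE bp_orth]] := IH b; have [r [rE er_orth]] := IH e.
have e_r v : orth E v -> pairing e v = pairing r v.
  move=> vE; have := er_orth v vE.
  by rewrite (@pairing_linl _ v e r _ 1 (-1)) => [|i]; [lra | ring].
pose c := pairing r p / pairing r r.
pose q i := 1 * p i + (- c) * r i.
have qE : orth E q by exact: orth_lin (fun i => erefl (q i)) pE rE.
exists q; split.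
  apply/List.Forall_cons_iff; split => //.
  rewrite e_r // (pairing_linr _ (fun i => erefl (q i))).
  have [r0 | r_neq0] := eqVneq (pairing r r) 0.
    by rewrite !(pairing0l _ (pairing_self_eq0 r0)); ring.
  by rewrite /c mulNr divfK // mul1r subrr.
move=> v /List.Forall_cons_iff [ev0 vE].
rewrite (@pairing_linl _ v (fun i => b i - p i) r _ 1 c) => [|i];
  last by rewrite /q; ring.
by rewrite bp_orth // -e_r // ev0; ring.
Qed.

Lemma sqdist_along b p w z (s : R) : (forall i, z i = p i + s * w i) ->
  sqdist b z = sqdist b p - 2 * s * pairing (fun i => b i - p i) w
               + s ^+ 2 * pairing w w.
Proof.
move=> zE; rewrite /sqdist (@pairing_self_lin _ (fun i => b i - p i) w _ 1 (- s)).
  by ring.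
by move=> i; rewrite zE; ring.
Qed.

Lemma sqdist_convex b p v z (t : R) : 0 <= t <= 1 ->
  (forall i, z i = p i + t * (v i - p i)) ->
  sqdist b z <= (1 - t) * sqdist b p + t * sqdist b v.
Proof.
move=> /andP [t_ge0 t_le1] zE.
rewrite (sqdist_along _ zE) (@sqdist_along b p (fun i => v i - p i) v 1) => [|i];
  last by ring.
have : 0 <= t * (1 - t) * pairing (fun i => v i - p i) (fun i => v i - p i).
  by rewrite !mulr_ge0 ?pairing_self_ge0 ?subr_ge0.
nra.
Qed.

Lemma nearest_polycone_exists G E b : exists p, polycone E G p /\
  forall v, polycone E G v -> sqdist b p <= sqdist b v.
Proof.
elim: G E b => [|g G IH] E b.
  have [p [pE bp_orth]] := orth_proj_exists E b.
  exists p; split => // v [vE _].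
  rewrite (@sqdist_along b p (fun i => v i - p i) v 1) => [|i]; last by ring.
  rewrite bp_orth; last by apply: (@orth_lin E v p _ 1 (-1)) => // i; ring.
  by have := pairing_self_ge0 (fun i => v i - p i); lra.
have [p [[pE pG] p_min]] := IH E b.
have cone_drop v : polycone E (g :: G) v -> polycone E G v.
  by move=> [vE /List.Forall_cons_iff [_ vG]].
have [gp_ge0 | gp_lt0] := lerP 0 (pairing g p).
  exists p; split => [|v /cone_drop]; last exact: p_min.
  by split => //; apply/List.Forall_cons_iff.
(* Otherwise the nearest point lies on the facet [<g, .> = 0]: a segment from
   [p] to a farther point of the cone crosses that facet. *)
have [q [[/List.Forall_cons_iff [gq0 qE] qG] q_min]] := IH (g :: E) b.
exists q; split.
  by split => //; apply/List.Forall_cons_iff; split; [rewrite gq0 | ].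
move=> v v_cone; have [vE /List.Forall_cons_iff [gv_ge0 vG]] := v_cone.
pose t := pairing g p / (pairing g p - pairing g v).
have den_lt0 : pairing g p - pairing g v < 0 by lra.
have t_ge0 : 0 <= t by rewrite /t ler_ndivlMr // mul0r ltW.
have t_le1 : t <= 1 by rewrite /t ler_ndivrMr //; lra.
pose z i := (1 - t) * p i + t * v i.
have gz0 : pairing g z = 0.
  rewrite (pairing_linr _ (fun i => erefl (z i))) /t.
  by field; rewrite lt_eqF.
have z_cone : polycone (g :: E) G z.
  have [zE zG] := polycone_conic (ltac:(lra) : 0 <= 1 - t) t_ge0
    (fun i => erefl (z i)) (conj pE pG) (cone_drop _ v_cone).
  by split => //; apply/List.Forall_cons_iff.
have := q_min z z_cone; have := p_min v (cone_drop _ v_cone).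
have := @sqdist_convex b p v z t (ltac:(by rewrite t_ge0 t_le1))
  (fun i => ltac:(rewrite /z; ring)).
nra.
Qed.

Lemma nearest_polycone_obtuse E G b p : polycone E G p ->
  (forall v, polycone E G v -> sqdist b p <= sqdist b v) ->
  forall v, polycone E G v -> pairing (fun i => b i - p i) (fun i => v i - p i) <= 0.
Proof.
move=> p_cone p_min v v_cone; set c := pairing _ _.
rewrite leNgt; apply/negP => c_gt0.
have N_ge0 := pairing_self_ge0 (fun i => v i - p i).
set N := pairing _ _ in N_ge0.
pose s := c / (N + c).
have s_gt0 : 0 < s by rewrite divr_gt0 //; lra.
have sNc : s * (N + c) = c by rewrite /s divfK // gt_eqF //; lra.
have s_le1 : s <= 1 by rewrite /s ler_pdivrMr; lra.
have s_cone : polycone E G (fun i => p i + s * (v i - p i)).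
  by apply: (@polycone_conic E G p v _ (1 - s) s) => // [||i]; [lra | lra | ring].
have := p_min _ s_cone.
rewrite (sqdist_along _ (fun i => erefl (p i + s * (v i - p i)))) -/c -/N.
nra.
Qed.

Lemma nearest_polycone_normal E G b p : polycone E G p ->
  (forall v, polycone E G v -> sqdist b p <= sqdist b v) ->
  (forall v, polycone E G v -> pairing (fun i => b i - p i) v <= 0) /\
  pairing (fun i => b i - p i) p = 0.
Proof.
move=> p_cone p_min; have obtuse := nearest_polycone_obtuse p_cone p_min.
set bp := fun i => b i - p i.
have scaled (k : R) : 0 <= k -> (k - 1) * pairing bp p <= 0.
  move=> k_ge0.
  have := obtuse _ (polycone_conic k_ge0 (lexx 0) (fun i => erefl _) p_cone p_cone).
  rewrite (@pairing_linr _ bp p p (fun i => k * p i + 0 * p i - p i) k (-1)) => [|i];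
    last by ring.
  by rewrite mulN1r mulrBl mul1r.
have bp_p0 : pairing bp p = 0.
  by have := scaled 0 (lexx _); have := scaled 2 (ler0n _ 2); lra.
split => // v v_cone; have := obtuse v v_cone.
by rewrite (@pairing_linr _ bp v p (fun i => v i - p i) 1 (-1)) => [|i]; [lra | ring].
Qed.

End PolyhedralCone.

Lemma Forall_mapP (I : eqType) (T : Type) (P : T -> Prop) (f : I -> T) (s : seq I) :
  List.Forall P [seq f i | i <- s] <-> (forall i, i \in s -> P (f i)).
Proof.
elim: s => [|i s IH] /=; first by split.
rewrite List.Forall_cons_iff IH; split=> [[Pi Ps] j | Ps].
  by rewrite in_cons => /orP [/eqP -> | /Ps].
by split=> [|j js]; apply: Ps; rewrite in_cons ?eqxx ?js ?orbT.
Qed.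

Section LambdaExistence.
Variables (d n : nat) (u : 'I_n -> 'I_d -> int).
Implicit Types (a l v : 'I_n -> R) (x : 'I_n -> CC).

Definition gamma_eqs : seq ('I_n -> R) :=
  [seq (fun rho => ucoord u rho i) | i <- enum 'I_d].

Definition support_ineqs x : seq ('I_n -> R) :=
  [seq (fun i => (i == rho)%:R) | rho <- enum 'I_n & x rho != 0].

Lemma sigma_x_polycone x v :
  sigma_x u x v <-> polycone gamma_eqs (support_ineqs x) v.
Proof.
rewrite /polycone /orth /gamma_eqs /support_ineqs !Forall_mapP.
split=> [[vG vx] | [vG vx]]; split.
- by move=> i _; rewrite pairingC; apply: vG.
- by move=> rho; rewrite mem_filter pairing_deltal => /andP [/vx].
- by move=> i; rewrite -[RHS](vG i (mem_enum _ i)) pairingC.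
- move=> rho x_rho; rewrite -pairing_deltal; apply: vx.
  by rewrite mem_filter x_rho mem_enum.
Qed.

(* The hypotheses characterize [l] as the nearest point of [sigma_x] to [-a];
   Cauchy-Schwarz then makes [l] span the minimizing ray of [<a, v>/||v||]. *)
Lemma is_lambda_of_normal a x l : sigma_x u x l ->
  (forall v, sigma_x u x v -> pairing (fun i => - a i - l i) v <= 0) ->
  pairing (fun i => - a i - l i) l = 0 ->
  (exists2 v0, sigma_x u x v0 & pairing a v0 < 0) -> is_lambda u a x l.
Proof.
move=> l_sigma normal orth [v0 v0_sigma av0_lt0].
have splitE v : pairing (fun i => - a i - l i) v = - pairing a v - pairing l v.
  by rewrite (@pairing_linl _ v a l _ (-1) (-1)) => [|i]; [ring | ring].
have lv0_gt0 : 0 < pairing l v0 by have := normal v0 v0_sigma; rewrite splitE; lra.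
have l_nz : nonzero l.
  case: (pickP (fun rho => l rho != 0)) => [rho l_rho | l0]; first by exists rho.
  by move: lv0_gt0; rewrite pairing0l ?ltxx // => rho; apply/eqP/negbFE/l0.
have norm_gt0 := normR_gt0 l_nz.
have ratio_l : Defs.ratio a l = - normR l.
  have al : pairing a l = - normR l ^+ 2.
    rewrite normR_pairing sqr_sqrtr ?pairing_self_ge0 //.
    by move: orth; rewrite splitE; lra.
  by rewrite /Defs.ratio al expr2 mulNr mulfK ?gt_eqF.
have cs_bound v : sigma_x u x v -> nonzero v ->
    - normR l * normR v <= pairing a v /\ 0 < normR v.
  move=> v_sigma v_nz; split; last exact: normR_gt0.
  have [cs _] := cauchy_schwarz l_nz v_nz.
  by have := normal v v_sigma; rewrite splitE; lra.
split=> //; split=> //.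
- by rewrite ratio_l oppr_lt0.
- move=> v v_sigma v_nz; have [bound nv_gt0] := cs_bound v v_sigma v_nz.
  by rewrite ratio_l /Defs.ratio ler_pdivlMr.
- move=> v v_sigma v_nz ratio_v; have [bound nv_gt0] := cs_bound v v_sigma v_nz.
  have [cs /(_ _) v_eq] := cauchy_schwarz l_nz v_nz.
  exists (normR v / normR l); first by rewrite divr_gt0.
  apply: v_eq; move: ratio_v; rewrite ratio_l /Defs.ratio.
  move=> /(congr1 (fun r => r * normR v)).
  rewrite divfK ?gt_eqF // => av.
  by have := normal v v_sigma; rewrite splitE; lra.
- by rewrite ratio_l opprK.
Qed.

Lemma lambda_exists a x :
  (exists2 v0, sigma_x u x v0 & pairing a v0 < 0) -> exists l, is_lambda u a x l.
Proof.
move=> neg_dir.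
have [l [l_cone l_min]] :=
  nearest_polycone_exists (support_ineqs x) gamma_eqs (fun i => - a i).
have [normal orth] := nearest_polycone_normal l_cone l_min.
exists l; apply: is_lambda_of_normal => // [|v /sigma_x_polycone]; last exact: normal.
exact/sigma_x_polycone.
Qed.

End LambdaExistence.

Section FanCombinatorics.
Variables (d n : nat) (u : 'I_n -> 'I_d -> int) (F : {set {set 'I_n}}).
Implicit Types (a v : 'I_n -> R) (C sigma : {set 'I_n}).

Lemma maximal_cone_above sigma : sigma \in F ->
  exists2 tau, maximal_cone F tau & sigma \subset tau.
Proof.
move=> sigmaF.
pose P := [pred tau : {set 'I_n} | (tau \in F) && (sigma \subset tau)].
have P_sigma : P sigma by rewrite /= sigmaF subxx.
case: (arg_maxnP (fun tau : {set 'I_n} => #|tau|) P_sigma).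
move=> tau /andP [tauF sub] tau_max.
exists tau => //; split=> // tau' tau'F sub'.
apply/eqP; rewrite eq_sym eqEcard sub' /=; apply: tau_max.
by rewrite /= tau'F (subset_trans sub sub').
Qed.

Lemma sum_dotd_ucoord (c : 'I_n -> R) (m : 'I_d -> R) :
  \sum_(rho < n) c rho * dotd m (ucoord u rho) =
  dotd m (fun i => \sum_(rho < n) c rho * ucoord u rho i).
Proof.
rewrite /dotd; under eq_bigr do rewrite mulr_sumr.
rewrite exchange_big /=; apply: eq_bigr => i _; rewrite mulr_sumr.
by apply: eq_bigr => rho _; ring.
Qed.

(* [phi rho = a rho + <m_sigma, u_rho>] is the slack of the support function
   of [D] on the maximal cone [sigma]. *)
Lemma ample_slack a sigma : ample u F a -> maximal_cone F sigma ->
  exists phi : 'I_n -> R,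
    [/\ forall rho, rho \in sigma -> phi rho = 0,
        forall rho, rho \notin sigma -> 0 < phi rho &
        forall v, inGammaR u v -> pairing a v = \sum_(rho < n) v rho * phi rho].
Proof.
move=> a_ample sigma_max; have [m [m_in m_out]] := a_ample sigma sigma_max.
exists (fun rho => a rho + dotd m (ucoord u rho)); split.
- by move=> rho /m_in ->; rewrite subrr.
- by move=> rho /m_out; rewrite -subr_gt0 opprK addrC.
move=> v v_gamma.
have m_v : \sum_(rho < n) v rho * dotd m (ucoord u rho) = 0.
  by rewrite sum_dotd_ucoord /dotd big1 // => i _; rewrite v_gamma mulr0.
under eq_bigr do rewrite mulrDr.
by rewrite big_split /= m_v addr0; apply: eq_bigr => rho _; rewrite mulrC.
Qed.

Lemma ample_pairing_ge0 a sigma v : ample u F a -> maximal_cone F sigma ->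
  inGammaR u v -> (forall rho, v rho < 0 -> rho \in sigma) -> 0 <= pairing a v.
Proof.
move=> a_ample sigma_max v_gamma v_neg.
have [phi [phi0 phi_gt0 ->]] := ample_slack a_ample sigma_max; last by [].
apply: sumr_ge0 => rho _; have [rho_sigma | rho_sigma] := boolP (rho \in sigma).
  by rewrite phi0 ?mulr0.
apply: mulr_ge0; last exact/ltW/phi_gt0.
by rewrite leNgt; apply: contra rho_sigma => /v_neg.
Qed.

(* The relation [sum_(rho in C) u_rho = sum_rho c_rho u_rho] with [c] supported
   on a cone gives a vector of [Gamma(G)] that is negative on [D]. *)
Lemma primitive_collection_neg_direction a C :
  complete_fan u F -> ample u F a -> primitive_collection F C ->
  exists2 v0, inGammaR u v0 /\ (forall rho, rho \notin C -> 0 <= v0 rho) &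
              pairing a v0 < 0.
Proof.
move=> F_complete a_ample [C_notin _].
pose ind rho : R := (rho \in C)%:R.
have [s sF [c [c_ge0 [c_out c_sum]]]] :=
  F_complete (fun i => \sum_(rho < n) ind rho * ucoord u rho i).
have [s' s'_max ss'] := maximal_cone_above sF.
have [phi [phi0 phi_gt0 a_slack]] := ample_slack a_ample s'_max.
have [r0 r0C r0s'] := subsetPn (C_notin s' (proj1 s'_max)).
exists (fun rho => c rho - ind rho); first split.
- move=> i; under eq_bigr do rewrite mulrBl.
  by rewrite sumrB -c_sum subrr.
- by move=> rho rhoC; rewrite /ind (negbTE rhoC) subr0.
rewrite a_slack; last first.
  by move=> i; under eq_bigr do rewrite mulrBl; rewrite sumrB -c_sum subrr.
have term_le0 rho : (c rho - ind rho) * phi rho <= 0.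
  have [rho_s' | rho_s'] := boolP (rho \in s'); first by rewrite phi0 ?mulr0.
  rewrite c_out; last by apply: contra rho_s'; apply: (subsetP ss').
  by rewrite sub0r mulNr oppr_le0 mulr_ge0 ?ler0n // ltW ?phi_gt0.
rewrite (bigD1 r0) //= -[X in _ < X](addr0 0) ltr_leD ?sumr_le0 //.
rewrite c_out; last by apply: contra r0s'; apply: (subsetP ss').
by rewrite /ind r0C sub0r mulN1r oppr_lt0 phi_gt0.
Qed.

Lemma ucoord_in_cone sigma r : r \in sigma -> in_cone u sigma (ucoord u r).
Proof.
move=> r_sigma; exists (fun rho => (rho == r)%:R); split; [|split].
- by move=> rho; rewrite ler0n.
- by move=> rho; case: eqP => [-> | //]; rewrite r_sigma.
- move=> i; rewrite (bigD1 r) //= eqxx mul1r big1 ?addr0 // => rho /negbTE ->.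
  by rewrite mul0r.
Qed.

Lemma primitive_collection_sub (S : {set 'I_n}) :
  (forall sigma, sigma \in F -> ~~ (S \subset sigma)) ->
  exists2 C, primitive_collection F C & C \subset S.
Proof.
move=> S_notin; pose bad (C : {set 'I_n}) := [forall s in F, ~~ (C \subset s)].
pose P (C : {set 'I_n}) := (C \subset S) && bad C.
have P_S : P S by rewrite /P subxx; apply/forall_inP.
case: (arg_minnP (fun C : {set 'I_n} => #|C|) P_S).
move=> C /andP [C_sub C_bad] C_min.
exists C => //; split=> [s sF | C' C'C]; first exact: (forall_inP C_bad).
have : ~~ bad C'.
  apply/negP => C'_bad; have := C_min C'.
  rewrite /P (subset_trans (proper_sub C'C) C_sub) C'_bad => /(_ isT).
  by rewrite leqNgt (proper_card C'C).
by rewrite negb_forall_in => /exists_inP [s sF /negPn C's]; exists s.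
Qed.

(* With [-u_r] in the cone [t], no cone contains [r |: t] since cones are
   strongly convex. *)
Lemma ray_in_primitive_collection r : is_fan u F -> complete_fan u F ->
  exists2 C, primitive_collection F C & r \in C.
Proof.
move=> [u_prim [_ F_pointed _ _ _]] F_complete.
have [t tF [c [c_ge0 [c_out c_sum]]]] := F_complete (fun i => - ucoord u r i).
have rt_notin s : s \in F -> ~~ (r |: t \subset s).
  move=> sF; apply/negP => rt_s.
  have u_r := ucoord_in_cone (subsetP rt_s r (setU11 r t)).
  have u_rN : in_cone u s (fun i => - ucoord u r i).
    exists c; split=> //; split=> // rho rho_s; apply: c_out.
    by apply: contra rho_s => /(subsetP (subset_trans (subsetUr _ _) rt_s)).
  have [[i u_ri] _] := u_prim r.
  move: (F_pointed s sF _ u_r u_rN) => /(congr1 (fun f => f i)) /eqP.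
  by rewrite /ucoord intr_eq0 (negbTE u_ri).
have [C C_prim C_sub] := primitive_collection_sub rt_notin.
exists C => //; apply: contraT => rC; have Ct : C \subset t.
  apply/subsetP => rho rhoC; move: (subsetP C_sub rho rhoC).
  by rewrite in_setU1 => /orP [/eqP rho_r | //]; rewrite -rho_r rhoC in rC.
by have := proj1 C_prim t tF; rewrite Ct.
Qed.

Lemma primitive_collection_neg_support a C l :
  ample u F a -> primitive_collection F C -> inGammaR u l ->
  (forall rho, rho \notin C -> 0 <= l rho) -> pairing a l < 0 ->
  forall rho, rho \in C -> l rho < 0.
Proof.
move=> a_ample [_ C_min] l_gamma l_out al_lt0.
pose N := [set rho | l rho < 0].
have NC : N \subset C.
  apply/subsetP => rho; rewrite inE; apply: contraTT => /l_out.
  by rewrite -leNgt.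
suff <- : N = C by move=> rho; rewrite inE.
apply/eqP; apply: contraT => NC_neq.
have [s sF Ns] := C_min N (ltac:(by rewrite properEneq NC_neq NC)).
have [s' s'_max ss'] := maximal_cone_above sF.
have l_neg rho : l rho < 0 -> rho \in s'.
  by move=> l_rho; apply: (subsetP (subset_trans Ns ss')); rewrite inE.
by have := ample_pairing_ge0 a_ample s'_max l_gamma l_neg; rewrite leNgt al_lt0.
Qed.

End FanCombinatorics.

Section ZariskiClosure.
Variable n : nat.
Implicit Types (S : ('I_n -> CC) -> Prop) (x y : 'I_n -> CC).

(* On the line through [y0], [p] restricts to a univariate polynomial with
   infinitely many roots [1, 2, ...]; its value at [0] is [p] at the origin. *)
Lemma zclosure_origin S y0 : S y0 ->
  (forall (t : CC) y, t != 0 -> S y -> S (fun i => t * y i)) ->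
  zclosure S (origin n).
Proof.
move=> S_y0 S_scale p p_S.
pose q : {poly CC} := \sum_(m <- msupp p)
  (p@_m * \prod_(i < n) y0 i ^+ m i) *: 'X^(\sum_(i < n) m i)%N.
have qE t : q.[t] = p.@[fun i => t * y0 i].
  rewrite mevalE horner_sum; apply: eq_bigr => m _.
  rewrite hornerZ hornerXn -mulrA; congr (_ * _).
  under [RHS]eq_bigr do rewrite exprMn.
  by rewrite big_split /= prodrXr mulrC.
have q0 : q = 0.
  apply: contraTeq isT => q_neq0.
  pose rs := [seq (k.+1)%:R : CC | k <- iota 0 (size q)].
  have := max_poly_roots q_neq0 (rs := rs).
  rewrite size_map size_iota ltnn; apply.
    apply/allP => _ /mapP [k _ ->]; rewrite /root qE; apply/eqP/p_S.
    by apply: S_scale => //; rewrite pnatr_eq0.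
  rewrite map_inj_uniq ?iota_uniq // => k1 k2 /eqP.
  by rewrite eqr_nat eqSS => /eqP.
have := qE 0; rewrite q0 horner0 => ->.
by apply: meval_eq => i; rewrite mul0r.
Qed.

Lemma zclosure_coord_eq0 S x r : (forall y, S y -> y r = 0) ->
  zclosure S x -> x r = 0.
Proof.
move=> S_r x_cl; have := x_cl 'X_r; rewrite mevalXU; apply=> y /S_r.
by rewrite mevalXU.
Qed.

End ZariskiClosure.

Section Strata.
Variables (d n : nat) (u : 'I_n -> 'I_d -> int) (F : {set {set 'I_n}}).
Variable a : 'I_n -> R.
Implicit Types (l : 'I_n -> R) (x y : 'I_n -> CC).

Lemma is_lambda_support x y l : (forall rho, (x rho != 0) = (y rho != 0)) ->
  is_lambda u a x l -> is_lambda u a y l.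
Proof.
move=> supp_xy.
have sigma_xy v : sigma_x u x v <-> sigma_x u y v.
  split=> -[v_gamma v_supp]; split=> // rho;
    [rewrite -supp_xy | rewrite supp_xy]; exact: v_supp.
move=> [l_sigma [l_nz ratio_neg l_min l_uniq l_norm]].
split; first exact/sigma_xy.
by split=> // v /sigma_xy; [apply: l_min | apply: l_uniq].
Qed.

Lemma stratum_scale l y (t : CC) : t != 0 ->
  stratum u F a l y -> stratum u F a l (fun i => t * y i).
Proof.
move=> t_nz [[C C_prim C_y] y_lambda]; split.
  by exists C => // rho /C_y ->; rewrite mulr0.
by apply: is_lambda_support y_lambda => rho; rewrite mulf_eq0 negb_or t_nz.
Qed.

Lemma stratum_coord_eq0 l y r : stratum u F a l y -> l r < 0 -> y r = 0.
Proof.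
move=> [_ [[_ l_supp] _]] l_r; apply/eqP; apply: contraTT l_r => /l_supp.
by rewrite -leNgt.
Qed.

Lemma Lambda_neg_coord r : is_fan u F -> complete_fan u F -> ample u F a ->
  exists2 l, LambdaD u F a l & l r < 0.
Proof.
move=> F_fan F_complete a_ample.
have [C C_prim rC] := ray_in_primitive_collection r F_fan F_complete.
pose xC rho : CC := if rho \in C then 0 else 1.
have sigma_xC v : sigma_x u xC v <->
    inGammaR u v /\ (forall rho, rho \notin C -> 0 <= v rho).
  split=> -[v_gamma v_supp]; split=> // rho.
    by move=> rho_C; apply: v_supp; rewrite /xC (negbTE rho_C) oner_neq0.
  by rewrite /xC; case: ifPn => [_|rho_C _]; [rewrite eqxx | apply: v_supp].
have [v0 v0_sigma av0_lt0] :=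
  primitive_collection_neg_direction F_complete a_ample C_prim.
have [l l_lambda] :=
  lambda_exists (ex_intro2 _ _ v0 (proj2 (sigma_xC v0) v0_sigma) av0_lt0).
exists l; first by exists xC => //; exists C => // rho rho_C; rewrite /xC rho_C.
have [l_sigma [l_nz ratio_lt0 _ _ _]] := l_lambda.
have [l_gamma l_out] := proj1 (sigma_xC l) l_sigma.
apply: (primitive_collection_neg_support a_ample C_prim l_gamma l_out) rC.
by move: ratio_lt0; rewrite /Defs.ratio ltr_pdivrMr ?mul0r ?normR_gt0.
Qed.

End Strata.

Theorem corollary5p33 (d n : nat) (u : 'I_n -> 'I_d -> int)
    (F : {set {set 'I_n}}) (a : 'I_n -> R) :
  is_fan u F -> complete_fan u F -> projective u F -> ample u F a ->
  (forall x : 'I_n -> CC,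
     x = origin n <->
     (forall l, LambdaD u F a l -> zclosure (stratum u F a l) x)) /\
  (forall lamC : {set 'I_n} -> ('I_n -> R),
     (forall C, primitive_collection F C ->
        LambdaD u F a (lamC C) /\
        (forall x, zclosure (stratum u F a (lamC C)) x <-> VC C x)) ->
     forall x : 'I_n -> CC,
       x = origin n <->
       (forall C, primitive_collection F C -> zclosure (stratum u F a (lamC C)) x)).
Proof.
move=> F_fan F_complete _ a_ample.
split=> [x | lamC lamC_spec x]; split.
- move=> -> l [x0 x0_Z x0_lambda].
  apply: (@zclosure_origin _ _ x0); first by split.
  by move=> t y; apply: stratum_scale.
- move=> x_cl; apply: functional_extensionality => r.
  have [l l_Lambda l_r] := Lambda_neg_coord r F_fan F_complete a_ample.
  apply: zclosure_coord_eq0 (x_cl l l_Lambda) => y y_l.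
  exact: stratum_coord_eq0 y_l l_r.
- by move=> -> C C_prim; apply/(proj2 (lamC_spec C C_prim)).
- move=> x_cl; apply: functional_extensionality => r.
  have [C C_prim r_C] := ray_in_primitive_collection r F_fan F_complete.
  exact: (proj1 (proj2 (lamC_spec C C_prim) x) (x_cl C C_prim)).
Qed.
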